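(* (1) $\mathbb{S}_1^*=K^*(1+F)^*\simeq K^*\times\mathrm{GL}_\infty(K)$. (2) $Z(\mathbb{S}_1^* )=K^*$ and $Z((1+F)^* )=\{1\}$. (3) $\mathrm{Inn}(\mathbb{S}_1)\simeq\mathrm{GL}_\infty(K)$ via $\omega_u\leftrightarrow u$ for $u\in(1+F)^*$.
   Context: $K$ is a field of characteristic zero. $\mathbb{S}_1=K\langle x,y\mid yx=1\rangle$; $\mathbb{S}_1^*$ is its group of units and $Z(G)$ denotes the centre of a group $G$. For $i,j\in\mathbb{N}$, $E_{ij}:=x^iy^j-x^{i+1}y^{j+1}$, and $F=\bigoplus_{i,j}KE_{ij}$, an ideal isomorphic to the algebra $M_\infty(K)=\bigcup_{d\ge1}M_d(K)$ of $\mathbb{N}\times\mathbb{N}$ matrices with finitely many nonzero entries. $(1+F)^*$ is the group of units of the monoid $1+F$, and $\mathrm{GL}_\infty(K)$ is the group of units of $1+M_\infty(K)$. $\mathrm{Inn}(\mathbb{S}_1)=\{\omega_u:a\mapsto uau^{-1}\mid u\in\mathbb{S}_1^*\}$. *)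

From HB Require Import structures.
From mathcomp Require Import all_boot all_order all_algebra.
Set Implicit Arguments. Unset Strict Implicit. Unset Printing Implicit Defensive.
Import GRing.Theory.
Local Open Scope ring_scope.

(* Elements of S_1 = K<x,y | yx = 1> are represented through the standard
   K-basis {x^i y^j : i,j in N}: an element is a finitely supported family of
   coefficients (c_ij), stored as p : {poly {poly K}} with c_ij = p`_i`_j.
   The same carrier represents M_oo(K) (finitely supported N x N matrices,
   entry (i,j) = m`_i`_j). *)
Section Jacobson.
Variable K : fieldType.

Definition bas (i j : nat) : {poly {poly K}} := ('X^j : {poly K}) *: 'X^i.

Definition sc (c : K) : {poly {poly K}} := (c%:P)%:P.

(* multiplication of S_1:  x^i y^j * x^k y^l = x^(i + (k - j)) y^(l + (j - k))
   (truncated subtraction), extended bilinearly. *)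
Definition smul (p q : {poly {poly K}}) : {poly {poly K}} :=
  \sum_(i < size p) \sum_(j < size p`_i) \sum_(k < size q) \sum_(l < size q`_k)
     (p`_i`_j * q`_k`_l)%:P *: bas (i + (k - j)) (l + (j - k)).

Definition sone : {poly {poly K}} := bas 0 0.

Definition s1unit (u : {poly {poly K}}) : Prop :=
  exists v, smul u v = sone /\ smul v u = sone.

Definition mmul (m n : {poly {poly K}}) : {poly {poly K}} :=
  \sum_(i < size m) \sum_(k < size m`_i) \sum_(j < size n`_k)
     (m`_i`_k * n`_k`_j)%:P *: bas i j.

(* multiplication of the monoid 1 + M_oo(K), written on the M_oo-part:
   (1 + a)(1 + b) = 1 + (a + b + ab) *)
Definition circ (a b : {poly {poly K}}) : {poly {poly K}} := a + b + mmul a b.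

(* 1 + a is in GL_oo(K) (units of the monoid 1 + M_oo(K)) *)
Definition inGL (a : {poly {poly K}}) : Prop :=
  exists b, circ a b = 0 /\ circ b a = 0.

Definition Eij (i j : nat) : {poly {poly K}} := bas i j - bas i.+1 j.+1.

Definition toF (m : {poly {poly K}}) : {poly {poly K}} :=
  \sum_(i < size m) \sum_(j < size m`_i) (m`_i`_j)%:P *: Eij i j.

Definition inF (p : {poly {poly K}}) : Prop := exists m, p = toF m.

Definition in1F (u : {poly {poly K}}) : Prop :=
  inF (u - sone) /\
  exists v, inF (v - sone) /\ smul u v = sone /\ smul v u = sone.

Definition uF (a : {poly {poly K}}) : {poly {poly K}} := sone + toF a.

(* f = omega_u, i.e. f(s) = u s u^{-1} for all s (for u a unit this is
   equivalent to f(s) u = u s for all s) *)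
Definition conj_by (u : {poly {poly K}}) (f : {poly {poly K}} -> {poly {poly K}}) : Prop :=
  forall s, smul (f s) u = smul u s.

End Jacobson.

From Pilot Require Import Defs.
From HB Require Import structures.
From mathcomp Require Import all_boot all_order all_algebra.
From mathcomp Require Import zify ring.
Set Implicit Arguments. Unset Strict Implicit. Unset Printing Implicit Defensive.
Import GRing.Theory.
Local Open Scope ring_scope.

(* The map x |-> X, y |-> X^-1 from S_1 to the Laurent polynomials K[X, X^-1]
   is an algebra morphism with kernel F.  A unit of S_1 is thus sent to a unit
   of K[X, X^-1], a monomial, so a unit u and its inverse v have the form
   c x^n + f and c^-1 y^n + g with f, g in F (up to swapping u and v).  The
   functional tau(p) = sum_i i p_ii vanishes on commutators [p, f] with f in F,
   while tau(x^n y^n) - tau(y^n x^n) = n; evaluating tau on uv = vu = 1 forces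
   n = 0 in characteristic zero, hence u lies in K^* (1 + F)^*.  Since
   E_ij <-> e_ij identifies 1 + F with 1 + M_oo(K), the statements on centres
   and on Inn(S_1) reduce to the fact that a finitary matrix commuting with
   every matrix unit e_ij, i <> j, is zero. *)

Section AdditiveMaps.
Variables (U V : zmodType) (f : U -> V).
Hypothesis fD : {morph f : x y / x + y}.

Lemma additive0 : f 0 = 0.
Proof. by apply: (addrI (f 0)); rewrite -fD !addr0. Qed.

Lemma additiveN : {morph f : x / - x}.
Proof. by move=> x; apply/eqP; rewrite -subr_eq0 opprK -fD addNr additive0. Qed.

Lemma additiveB : {morph f : x y / x - y}.
Proof. by move=> x y; rewrite fD additiveN. Qed.

Lemma additive_sum I (r : seq I) (Q : pred I) (F : I -> U) :
  f (\sum_(i <- r | Q i) F i) = \sum_(i <- r | Q i) f (F i).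
Proof. exact: (big_morph f fD additive0). Qed.

End AdditiveMaps.

Lemma sum_ord_widen (V : nmodType) n N (F : nat -> V) : (n <= N)%N ->
  (forall i, (n <= i < N)%N -> F i = 0) -> \sum_(i < n) F i = \sum_(i < N) F i.
Proof.
move=> le_nN F0; rewrite -!(big_mkord xpredT) (@big_cat_nat _ _ _ n 0 N _ _ (leq0n n) le_nN) /=.
by rewrite [X in _ + X]big1_seq ?addr0 // => i; rewrite mem_index_iota => /F0.
Qed.

Lemma sum_ord_single (V : nmodType) N a (aN : (a < N)%N) (F : 'I_N -> V) :
  (forall i : 'I_N, (i : nat) != a -> F i = 0) -> \sum_(i < N) F i = F (Ordinal aN).
Proof. by move=> F0; rewrite (bigD1 (Ordinal aN)) //= big1 ?addr0. Qed.

Lemma natrB_sub_eq0 (R : comNzRingType) (m1 n1 m2 n2 : nat) : (m1 + n2 = m2 + n1)%N ->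
  m1%:R - n1%:R - (m2%:R - n2%:R) = 0 :> R.
Proof.
move=> eq_mn; transitivity ((m1 + n2)%:R - (m2 + n1)%:R : R); first by rewrite !natrD; ring.
by rewrite eq_mn subrr.
Qed.

Lemma monomial_factor (R : idomainType) n (A B : {poly R}) : A * B = 'X^n ->
  exists c (a : nat), c != 0 /\ A = c%:P * 'X^a.
Proof.
elim: n A B => [|n IHn] A B eqAB.
  have unitA : A \is a GRing.unit by apply/unitrPr; exists B; rewrite eqAB expr0.
  move: unitA; rewrite poly_unitE => /andP[/eqP sA uA0].
  exists A`_0, 0%N; split; first by apply: contraTneq uA0 => ->; rewrite unitr0.
  by rewrite expr0 mulr1 {1}(size1_polyC (eq_leq sA)).
have : A.[0] * B.[0] = 0 by rewrite -hornerM eqAB hornerXn expr0n.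
move/eqP; rewrite mulf_eq0 => /orP[] /eqP root0.
  have /factor_theorem[A' eqA] : root A 0 by rewrite /root root0.
  move: eqAB; rewrite eqA subr0 mulrAC exprS [_ * 'X^n]mulrC.
  move/(mulIf (negbT (polyX_eq0 R))) => /IHn[c [a [c0 eqA']]].
  by exists c, a.+1; split => //; rewrite eqA' exprSr mulrA.
have /factor_theorem[B' eqB] : root B 0 by rewrite /root root0.
move: eqAB; rewrite eqB subr0 mulrA exprS [_ * 'X^n]mulrC.
by move/(mulIf (negbT (polyX_eq0 R))) => /IHn.
Qed.

Section Jacobson.
Variable K : fieldType.
Local Notation P := {poly {poly K}}.
Local Notation bas := (bas K).
Local Notation E := (Eij K).
Implicit Types (p q r m u v w : P) (c d : K).

Lemma poly2P p q : (forall i j, p`_i`_j = q`_i`_j) -> p = q.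
Proof. by move=> eq_pq; apply/polyP => i; apply/polyP => j; apply: eq_pq. Qed.

Lemma coef2CZ c p i j : (c%:P *: p)`_i`_j = c * p`_i`_j.
Proof. by rewrite coefZ coefCM. Qed.

Lemma coef2_bas a b i j : (bas a b)`_i`_j = if (i == a) && (j == b) then 1 else 0.
Proof.
rewrite /Defs.bas coefZ coefXn; case: (i == a) => /=; last by rewrite mulr0 coef0.
by rewrite mulr1 coefXn; case: (j == b).
Qed.

Definition boxed N p := forall i j, (N <= i)%N || (N <= j)%N -> p`_i`_j = 0.

Lemma size_boxed N p : boxed N p -> (size p <= N)%N.
Proof.
move=> bp; apply/leq_sizeP => i le_Ni; apply/polyP => j.
by rewrite coef0 bp ?le_Ni.
Qed.

Lemma size_coef_boxed N p i : boxed N p -> (size (p`_i)%R <= N)%N.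
Proof. by move=> bp; apply/leq_sizeP => j le_Nj; rewrite bp ?le_Nj ?orbT. Qed.

Lemma boxedW N M p : (N <= M)%N -> boxed N p -> boxed M p.
Proof. by move=> le_NM bp i j Mij; apply: bp; move: Mij; lia. Qed.

Lemma boxed_exists p : exists N, boxed N p.
Proof.
set M := (\max_(i < size p) size (p`_i)%R)%N; exists (size p + M)%N => i j.
case: (ltnP i (size p)) => [lt_ip|le_pi] Nij; last by rewrite (nth_default 0 le_pi) coef0.
have le_iM : (size (p`_i)%R <= M)%N :=
  @leq_bigmax _ (fun i : 'I_(size p) => size (p`_i)%R) (Ordinal lt_ip).
by rewrite nth_default //; apply: leq_trans le_iM _; lia.
Qed.

Lemma boxed_exists2 p q : exists N, boxed N p /\ boxed N q.
Proof.
case: (boxed_exists p) (boxed_exists q) => N bp [M bq].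
by exists (maxn N M); split; [apply: boxedW bp|apply: boxedW bq]; lia.
Qed.

Lemma boxed_exists3 p q r : exists N, [/\ boxed N p, boxed N q & boxed N r].
Proof.
case: (boxed_exists2 p q) (boxed_exists r) => N [bp bq] [M br].
by exists (maxn N M); split; [apply: boxedW bp|apply: boxedW bq|apply: boxedW br]; lia.
Qed.

Lemma boxed_bas N a b : (a < N)%N -> (b < N)%N -> boxed N (bas a b).
Proof. by move=> aN bN i j; rewrite coef2_bas; case: eqP; case: eqP => //=; lia. Qed.

Lemma boxedD N p q : boxed N p -> boxed N q -> boxed N (p + q).
Proof. by move=> bp bq i j Nij; rewrite !coefD bp ?bq ?addr0. Qed.

Lemma boxedZ N c p : boxed N p -> boxed N (c%:P *: p).
Proof. by move=> bp i j Nij; rewrite coef2CZ bp ?mulr0. Qed.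

Lemma sum_coef2_boxed (V : nmodType) N p (G : nat -> nat -> V) : boxed N p ->
  (forall i j, p`_i`_j = 0 -> G i j = 0) ->
  \sum_(i < size p) \sum_(j < size p`_i) G i j = \sum_(i < N) \sum_(j < N) G i j.
Proof.
move=> bp G0; rewrite (sum_ord_widen (F := fun i => \sum_(j < size p`_i) G i j)
  (size_boxed bp)) => [|i /andP[le_pi _]]; last first.
  rewrite big1 // => j _; rewrite G0 //.
  by move: (val j) => k; rewrite (nth_default 0 le_pi) coef0.
apply: eq_bigr => i _; apply: (sum_ord_widen (F := G i)); first exact: size_coef_boxed.
by move=> j /andP[le_pj _]; rewrite G0 // nth_default.
Qed.

Lemma expand_bas N p : boxed N p -> p = \sum_(i < N) \sum_(j < N) (p`_i`_j)%:P *: bas i j.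
Proof.
move=> bp; apply: poly2P => a b; rewrite !coef_sum.
under eq_bigr => i _ do rewrite !coef_sum.
have [/andP[aN bN]|Nab] := boolP ((a < N) && (b < N))%N; last first.
  rewrite bp; last by move: Nab; rewrite negb_and -!leqNgt.
  rewrite big1 // => i _; rewrite big1 // => j _; rewrite coef2CZ coef2_bas.
  suff -> : (a == i) && (b == j) = false by rewrite mulr0.
  by apply: contraNF Nab => /andP[/eqP-> /eqP->]; rewrite !ltn_ord.
rewrite (sum_ord_single aN) => [|i ia]; last first.
  by rewrite big1 // => j _; rewrite coef2CZ coef2_bas eq_sym (negbTE ia) mulr0.
rewrite (sum_ord_single bN) => [|j jb]; last first.
  by rewrite coef2CZ coef2_bas [b == j]eq_sym (negbTE jb) andbF mulr0.
by rewrite coef2CZ coef2_bas !eqxx mulr1.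
Qed.

Lemma sum_coef2_bas (V : nmodType) N a b (G : nat -> nat -> K -> V) :
  (a < N)%N -> (b < N)%N -> (forall i j, G i j 0 = 0) ->
  \sum_(i < N) \sum_(j < N) G i j (bas a b)`_i`_j = G a b 1.
Proof.
move=> aN bN G0; rewrite (sum_ord_single aN) => [|i ia]; last first.
  by rewrite big1 // => j _; rewrite coef2_bas (negbTE ia).
rewrite (sum_ord_single bN) => [|j jb]; last by rewrite coef2_bas (negbTE jb) andbF.
by rewrite coef2_bas !eqxx.
Qed.

Lemma additive_expand (V : zmodType) (f : P -> V) N p : {morph f : x y / x + y} ->
  boxed N p -> f p = \sum_(i < N) \sum_(j < N) f ((p`_i`_j)%:P *: bas i j).
Proof.
move=> fD bp; rewrite {1}(expand_bas bp) (additive_sum fD).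
by apply: eq_bigr => i _; apply: additive_sum.
Qed.

Lemma lin_ext (f g : P -> P) :
  {morph f : x y / x + y} -> (forall c p, f (c%:P *: p) = c%:P *: f p) ->
  {morph g : x y / x + y} -> (forall c p, g (c%:P *: p) = c%:P *: g p) ->
  (forall a b, f (bas a b) = g (bas a b)) -> f =1 g.
Proof.
move=> fD fZ gD gZ fg p; have [N bp] := boxed_exists p.
rewrite (additive_expand fD bp) (additive_expand gD bp).
by apply: eq_bigr => i _; apply: eq_bigr => j _; rewrite fZ gZ fg.
Qed.

Lemma lin_vanish (f : P -> K) :
  {morph f : x y / x + y} -> (forall c p, f (c%:P *: p) = c * f p) ->
  (forall a b, f (bas a b) = 0) -> f =1 fun=> 0.
Proof.
move=> fD fZ f0 p; have [N bp] := boxed_exists p.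
rewrite (additive_expand fD bp) big1 // => i _.
by rewrite big1 // => j _; rewrite fZ f0 mulr0.
Qed.

Lemma smul_boxE N p q : boxed N p -> boxed N q -> smul p q =
  \sum_(i < N) \sum_(j < N) \sum_(k < N) \sum_(l < N)
     (p`_i`_j * q`_k`_l)%:P *: bas (i + (k - j)) (l + (j - k)).
Proof.
move=> bp bq; pose G i j := \sum_(k < size q) \sum_(l < size q`_k)
  (p`_i`_j * q`_k`_l)%:P *: bas (i + (k - j)) (l + (j - k)).
rewrite /smul (sum_coef2_boxed (G := G) bp) => [|i j p0]; last first.
  by apply: big1 => k _; apply: big1 => l _; rewrite p0 mul0r scale0r.
apply: eq_bigr => i _; apply: eq_bigr => j _.
apply: (sum_coef2_boxed (G := fun k l => (p`_i`_j * q`_k`_l)%:P *: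
  bas (i + (k - j)) (l + (j - k)))) => // k l ->.
by rewrite mulr0 scale0r.
Qed.

Lemma smulDl p p' q : smul (p + p') q = smul p q + smul p' q.
Proof.
have [N [bp bp' bq]] := boxed_exists3 p p' q.
rewrite (smul_boxE (boxedD bp bp') bq) (smul_boxE bp bq) (smul_boxE bp' bq).
rewrite -big_split; apply: eq_bigr => i _.
rewrite -big_split; apply: eq_bigr => j _; rewrite -big_split; apply: eq_bigr => k _.
by rewrite -big_split; apply: eq_bigr => l _; rewrite !coefD mulrDl polyCD scalerDl.
Qed.

Lemma smulDr p q q' : smul p (q + q') = smul p q + smul p q'.
Proof.
have [N [bp bq bq']] := boxed_exists3 p q q'.
rewrite (smul_boxE bp (boxedD bq bq')) (smul_boxE bp bq) (smul_boxE bp bq').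
rewrite -big_split; apply: eq_bigr => i _.
rewrite -big_split; apply: eq_bigr => j _; rewrite -big_split; apply: eq_bigr => k _.
by rewrite -big_split; apply: eq_bigr => l _; rewrite !coefD mulrDr polyCD scalerDl.
Qed.

Lemma smulZl c p q : smul (c%:P *: p) q = c%:P *: smul p q.
Proof.
have [N [bp bq]] := boxed_exists2 p q.
rewrite (smul_boxE (boxedZ c bp) bq) (smul_boxE bp bq) scaler_sumr; apply: eq_bigr => i _.
rewrite scaler_sumr; apply: eq_bigr => j _; rewrite scaler_sumr; apply: eq_bigr => k _.
by rewrite scaler_sumr; apply: eq_bigr => l _; rewrite coef2CZ scalerA -polyCM mulrA.
Qed.

Lemma smulZr c p q : smul p (c%:P *: q) = c%:P *: smul p q.
Proof.
have [N [bp bq]] := boxed_exists2 p q.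
rewrite (smul_boxE bp (boxedZ c bq)) (smul_boxE bp bq) scaler_sumr; apply: eq_bigr => i _.
rewrite scaler_sumr; apply: eq_bigr => j _; rewrite scaler_sumr; apply: eq_bigr => k _.
by rewrite scaler_sumr; apply: eq_bigr => l _; rewrite coef2CZ scalerA -polyCM mulrCA.
Qed.

Lemma smulBl p p' q : smul (p - p') q = smul p q - smul p' q.
Proof. exact: (additiveB (fun p p' => smulDl p p' q)). Qed.

Lemma smulBr p q q' : smul p (q - q') = smul p q - smul p q'.
Proof. exact: (additiveB (smulDr p)). Qed.

Lemma smul_bas (a b c d : nat) : smul (bas a b) (bas c d) = bas (a + (c - b)) (d + (b - c)).
Proof.
pose N := (maxn (maxn a b) (maxn c d)).+1.
have [aN bN cN dN] : [/\ a < N, b < N, c < N & d < N]%N by rewrite /N; split; lia.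
rewrite (smul_boxE (boxed_bas aN bN) (boxed_bas cN dN)).
rewrite (sum_coef2_bas (G := fun i j x => \sum_(k < N) \sum_(l < N)
  (x * (bas c d)`_k`_l)%:P *: bas (i + (k - j)) (l + (j - k)))) //; last first.
  by move=> i j; apply: big1 => k _; apply: big1 => l _; rewrite mul0r scale0r.
rewrite (sum_coef2_bas (G := fun k l x => (1 * x)%:P *: bas (a + (k - b)) (l + (b - k)))) //.
  by rewrite mulr1 scale1r.
by move=> k l; rewrite mulr0 scale0r.
Qed.

Lemma smulA p q r : smul (smul p q) r = smul p (smul q r).
Proof.
move: p; apply: lin_ext => [p p'|c p|p p'|c p|a b]; rewrite ?(smulDl, smulZl) //.
move: q; apply: lin_ext => [q q'|c q|q q'|c q|c d];
  rewrite ?(smulDl, smulDr, smulZl, smulZr) //.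
move: r; apply: lin_ext => [r r'|e r|r r'|e r|e f]; rewrite ?(smulDr, smulZr) //.
by rewrite !smul_bas; congr (bas _ _); lia.
Qed.

Lemma smul1l p : smul (sone K) p = p.
Proof.
move: p; apply: (lin_ext (g := id)) => // [p p'|c p|a b]; rewrite ?smulDr ?smulZr //.
by rewrite /sone smul_bas add0n subn0 sub0n addn0.
Qed.

Lemma smul1r p : smul p (sone K) = p.
Proof.
move: p; apply: (lin_ext (g := id)) => // [p p'|c p|a b]; rewrite ?smulDl ?smulZl //.
by rewrite /sone smul_bas sub0n subn0 addn0.
Qed.

Lemma sc_sone c : sc c = c%:P *: sone K.
Proof.
apply: poly2P => i j; rewrite coef2CZ coef2_bas /sc !coefC.
by case: (i == 0%N); rewrite /= ?coef0 ?coefC ?mulr0 //; case: (j == 0%N); rewrite ?mulr1 ?mulr0.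
Qed.

Lemma smul_scl c p : smul (sc c) p = c%:P *: p.
Proof. by rewrite sc_sone smulZl smul1l. Qed.

Lemma smul_scr c p : smul p (sc c) = c%:P *: p.
Proof. by rewrite sc_sone smulZr smul1r. Qed.

Lemma scaleCI c p q : c != 0 -> c%:P *: p = c%:P *: q -> p = q.
Proof.
move=> c0 /(congr1 (fun x => (c^-1)%:P *: x)).
by rewrite /= !scalerA -polyCM mulVf // !scale1r.
Qed.

Lemma smulZZ c d u v : smul (c%:P *: u) (d%:P *: v) = (c * d)%:P *: smul u v.
Proof. by rewrite smulZl smulZr scalerA polyCM. Qed.

Lemma toF_boxE N m : boxed N m -> toF m = \sum_(i < N) \sum_(j < N) (m`_i`_j)%:P *: E i j.
Proof.
move=> bm; apply: (sum_coef2_boxed (G := fun i j => (m`_i`_j)%:P *: E i j)) => // i j ->.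
by rewrite scale0r.
Qed.

Lemma toFD m m' : toF (m + m') = toF m + toF m'.
Proof.
have [N [bm bm']] := boxed_exists2 m m'.
rewrite (toF_boxE (boxedD bm bm')) (toF_boxE bm) (toF_boxE bm') -big_split; apply: eq_bigr => i _.
by rewrite -big_split; apply: eq_bigr => j _; rewrite !coefD polyCD scalerDl.
Qed.

Lemma toFZ c m : toF (c%:P *: m) = c%:P *: toF m.
Proof.
have [N bm] := boxed_exists m.
rewrite (toF_boxE (boxedZ c bm)) (toF_boxE bm) scaler_sumr; apply: eq_bigr => i _.
by rewrite scaler_sumr; apply: eq_bigr => j _; rewrite coef2CZ polyCM scalerA.
Qed.

Lemma toF0 : toF 0 = 0 :> P.
Proof. exact: (additive0 toFD). Qed.

Lemma toFB m m' : toF (m - m') = toF m - toF m'.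
Proof. exact: (additiveB toFD). Qed.

Lemma toF_bas a b : toF (bas a b) = E a b.
Proof.
have [aN bN] : (a < (maxn a b).+1)%N /\ (b < (maxn a b).+1)%N by split; lia.
rewrite (toF_boxE (boxed_bas aN bN)).
by rewrite (sum_coef2_bas (G := fun i j x => x%:P *: E i j)) ?scale1r // => i j; rewrite scale0r.
Qed.

Lemma mmul_boxE N m n : boxed N m -> boxed N n ->
  mmul m n = \sum_(i < N) \sum_(k < N) \sum_(j < N) (m`_i`_k * n`_k`_j)%:P *: bas i j.
Proof.
move=> bm bn; pose G i k := \sum_(j < size n`_k) (m`_i`_k * n`_k`_j)%:P *: bas i j.
rewrite /mmul (sum_coef2_boxed (G := G) bm) => [|i k m0]; last first.
  by apply: big1 => j _; rewrite m0 mul0r scale0r.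
apply: eq_bigr => i _; apply: eq_bigr => k _.
apply: (sum_ord_widen (F := fun j => (m`_i`_k * n`_k`_j)%:P *: bas i j)).
  exact: size_coef_boxed.
by move=> j /andP[le_nj _]; rewrite (nth_default 0 le_nj) mulr0 scale0r.
Qed.

Lemma mmulDl m m' n : mmul (m + m') n = mmul m n + mmul m' n.
Proof.
have [N [bm bm' bn]] := boxed_exists3 m m' n.
rewrite (mmul_boxE (boxedD bm bm') bn) (mmul_boxE bm bn) (mmul_boxE bm' bn).
rewrite -big_split; apply: eq_bigr => i _.
rewrite -big_split; apply: eq_bigr => k _; rewrite -big_split; apply: eq_bigr => j _.
by rewrite !coefD mulrDl polyCD scalerDl.
Qed.

Lemma mmulDr m n n' : mmul m (n + n') = mmul m n + mmul m n'.
Proof.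
have [N [bm bn bn']] := boxed_exists3 m n n'.
rewrite (mmul_boxE bm (boxedD bn bn')) (mmul_boxE bm bn) (mmul_boxE bm bn').
rewrite -big_split; apply: eq_bigr => i _.
rewrite -big_split; apply: eq_bigr => k _; rewrite -big_split; apply: eq_bigr => j _.
by rewrite !coefD mulrDr polyCD scalerDl.
Qed.

Lemma mmulZl c m n : mmul (c%:P *: m) n = c%:P *: mmul m n.
Proof.
have [N [bm bn]] := boxed_exists2 m n.
rewrite (mmul_boxE (boxedZ c bm) bn) (mmul_boxE bm bn) scaler_sumr; apply: eq_bigr => i _.
rewrite scaler_sumr; apply: eq_bigr => k _; rewrite scaler_sumr; apply: eq_bigr => j _.
by rewrite coef2CZ scalerA -polyCM mulrA.
Qed.

Lemma mmulZr c m n : mmul m (c%:P *: n) = c%:P *: mmul m n.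
Proof.
have [N [bm bn]] := boxed_exists2 m n.
rewrite (mmul_boxE bm (boxedZ c bn)) (mmul_boxE bm bn) scaler_sumr; apply: eq_bigr => i _.
rewrite scaler_sumr; apply: eq_bigr => k _; rewrite scaler_sumr; apply: eq_bigr => j _.
by rewrite coef2CZ scalerA -polyCM mulrCA.
Qed.

Lemma mmul_bas (a b c d : nat) : mmul (bas a b) (bas c d) = if b == c then bas a d else 0.
Proof.
pose N := (maxn (maxn a b) (maxn c d)).+1.
have [aN bN cN dN] : [/\ a < N, b < N, c < N & d < N]%N by rewrite /N; split; lia.
rewrite (mmul_boxE (boxed_bas aN bN) (boxed_bas cN dN)).
rewrite (sum_coef2_bas (G := fun i k x => \sum_(j < N)
  (x * (bas c d)`_k`_j)%:P *: bas i j)) //; last first.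
  by move=> i k; apply: big1 => j _; rewrite mul0r scale0r.
case: eqP => [<-|bc].
  rewrite (sum_ord_single dN) => [|j jd]; last by rewrite coef2_bas (negbTE jd) andbF mulr0 scale0r.
  by rewrite coef2_bas !eqxx mulr1 scale1r.
by apply: big1 => j _; rewrite coef2_bas (introF eqP bc) mulr0 scale0r.
Qed.

Lemma smul_bas_E (a b c d : nat) :
  smul (bas a b) (E c d) = if (b <= c)%N then E (a + (c - b)) d else 0.
Proof.
rewrite /Eij smulBr !smul_bas; case: leqP => [le_bc|lt_cb].
  by congr (bas _ _ - bas _ _); lia.
by apply/eqP; rewrite subr_eq0; apply/eqP; congr (bas _ _); lia.
Qed.

Lemma smul_E (a b c d : nat) : smul (E a b) (E c d) = if b == c then E a d else 0.
Proof.
rewrite {1}/Eij smulBl !smul_bas_E; case: (ltngtP b c) => [lt_bc|lt_cb|<-].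
- have -> : (a.+1 + (c - b.+1) = a + (c - b))%N by lia.
  by rewrite subrr.
- by rewrite subrr.
- by rewrite subnn addn0 subr0.
Qed.

Lemma toF_mmul m n : toF (mmul m n) = smul (toF m) (toF n).
Proof.
move: m; apply: lin_ext => [m m'|c m|m m'|c m|a b];
  rewrite ?(mmulDl, mmulZl, toFD, toFZ, smulDl, smulZl) //.
move: n; apply: lin_ext => [n n'|c n|n n'|c n|c d];
  rewrite ?(mmulDr, mmulZr, toFD, toFZ, smulDr, smulZr) //.
by rewrite mmul_bas !toF_bas smul_E; case: eqP; rewrite ?toF_bas ?toF0.
Qed.

Lemma uF_circ m n : uF (circ m n) = smul (uF m) (uF n).
Proof.
rewrite /uF /circ !toFD toF_mmul !smulDl !smulDr smul1l smul1r smul1l.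
by rewrite !addrA [sone K + toF m + toF n]addrAC.
Qed.

Lemma uF0 : uF (0 : P) = sone K.
Proof. by rewrite /uF toF0 addr0. Qed.

Lemma inF0 : inF (0 : P).
Proof. by exists 0; rewrite toF0. Qed.

Lemma inFD p q : inF p -> inF q -> inF (p + q).
Proof. by case=> m -> [n ->]; exists (m + n); rewrite toFD. Qed.

Lemma inFB p q : inF p -> inF q -> inF (p - q).
Proof. by case=> m -> [n ->]; exists (m - n); rewrite toFB. Qed.

Lemma inFZ c p : inF p -> inF (c%:P *: p).
Proof. by case=> m ->; exists (c%:P *: m); rewrite toFZ. Qed.

Lemma inF_E a b : inF (E a b).
Proof. by exists (bas a b); rewrite toF_bas. Qed.

Lemma inF_sum I (r : seq I) (Q : pred I) (F : I -> P) :
  (forall i, Q i -> inF (F i)) -> inF (\sum_(i <- r | Q i) F i).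
Proof. exact: (big_ind (fun x : P => inF x) inF0 (@inFD)). Qed.

Definition itrace p : K := \sum_(i < size p) p`_i`_i * i%:R.

Lemma itrace_boxE N p : boxed N p -> itrace p = \sum_(i < N) p`_i`_i * i%:R.
Proof.
move=> bp; apply: (sum_ord_widen (F := fun i => p`_i`_i * i%:R)); first exact: size_boxed.
by move=> i /andP[le_pi _]; rewrite (nth_default 0 le_pi) coef0 mul0r.
Qed.

Lemma itraceD p q : itrace (p + q) = itrace p + itrace q.
Proof.
have [N [bp bq]] := boxed_exists2 p q.
rewrite (itrace_boxE (boxedD bp bq)) (itrace_boxE bp) (itrace_boxE bq) -big_split.
by apply: eq_bigr => i _; rewrite !coefD mulrDl.
Qed.

Lemma itraceZ c p : itrace (c%:P *: p) = c * itrace p.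
Proof.
have [N bp] := boxed_exists p.
rewrite (itrace_boxE (boxedZ c bp)) (itrace_boxE bp) mulr_sumr.
by apply: eq_bigr => i _; rewrite coef2CZ mulrA.
Qed.

Lemma itraceB p q : itrace (p - q) = itrace p - itrace q.
Proof. exact: (additiveB itraceD). Qed.

Lemma itrace_bas a b : itrace (bas a b) = (if a == b then a else 0)%:R.
Proof.
have [aN bN] : (a < (maxn a b).+1)%N /\ (b < (maxn a b).+1)%N by split; lia.
rewrite (itrace_boxE (boxed_bas aN bN)) (sum_ord_single aN) => [|i ia]; last first.
  by rewrite coef2_bas (negbTE ia) mul0r.
by rewrite coef2_bas eqxx /=; case: (a == b); rewrite ?mul1r ?mul0r.
Qed.

Lemma itrace_smulC p f : inF f -> itrace (smul p f) = itrace (smul f p).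
Proof.
case=> m ->; apply/eqP; rewrite -subr_eq0; apply/eqP; move: m.
apply: lin_vanish => [m m'|c m|i j].
- by rewrite toFD smulDr smulDl !itraceD; ring.
- by rewrite toFZ smulZr smulZl !itraceZ; ring.
rewrite toF_bas; move: p; apply: lin_vanish => [p p'|c p|k l].
- by rewrite smulDr smulDl !itraceD; ring.
- by rewrite smulZr smulZl !itraceZ; ring.
rewrite /Eij smulBr smulBl !smul_bas !itraceB !itrace_bas.
by apply: natrB_sub_eq0; repeat case: eqP => ?; lia.
Qed.

Lemma unit_index_eq0 n c d f g B B' : inF f -> inF g -> c * d = 1 ->
  smul B B' = bas n n -> smul B' B = sone K ->
  smul (c%:P *: B + f) (d%:P *: B' + g) = sone K ->
  smul (d%:P *: B' + g) (c%:P *: B + f) = sone K -> n%:R = 0 :> K.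
Proof.
move=> Ff Fg cd BB' B'B uv1 vu1.
move: (congr1 itrace uv1) (congr1 itrace vu1).
rewrite !(smulDl, smulDr, smulZl, smulZr, itraceD, itraceZ) BB' B'B.
rewrite (itrace_smulC B Fg) (itrace_smulC f Fg) (itrace_smulC B' Ff).
rewrite /sone !itrace_bas !eqxx => tr_uv tr_vu.
have /eqP := etrans tr_uv (esym tr_vu); rewrite -subr_eq0 => /eqP diff0.
have : c * d * n%:R = 0 by rewrite -diff0; ring.
by rewrite cd mul1r.
Qed.

(* [symb N] is the Laurent symbol multiplied by X^N: with truncated
   subtraction it is only faithful on elements of y-degree at most N. *)
Definition symb N p : {poly K} :=
  \sum_(i < size p) \sum_(j < size p`_i) (p`_i`_j)%:P * 'X^(i + N - j).

Lemma symb_boxE M N p : boxed M p ->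
  symb N p = \sum_(i < M) \sum_(j < M) (p`_i`_j)%:P * 'X^(i + N - j).
Proof.
move=> bp; apply: (sum_coef2_boxed (G := fun i j => (p`_i`_j)%:P * 'X^(i + N - j))) => //.
by move=> i j ->; rewrite mul0r.
Qed.

Lemma symbD N p q : symb N (p + q) = symb N p + symb N q.
Proof.
have [M [bp bq]] := boxed_exists2 p q.
rewrite (symb_boxE N (boxedD bp bq)) (symb_boxE N bp) (symb_boxE N bq) -big_split.
apply: eq_bigr => i _; rewrite -big_split; apply: eq_bigr => j _.
by rewrite !coefD polyCD mulrDl.
Qed.

Lemma symbZ N c p : symb N (c%:P *: p) = c%:P * symb N p.
Proof.
have [M bp] := boxed_exists p.
rewrite (symb_boxE N (boxedZ c bp)) (symb_boxE N bp) mulr_sumr; apply: eq_bigr => i _.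
by rewrite mulr_sumr; apply: eq_bigr => j _; rewrite coef2CZ polyCM mulrA.
Qed.

Lemma symbB N p q : symb N (p - q) = symb N p - symb N q.
Proof. exact: (additiveB (symbD N)). Qed.

Lemma symb_bas N a b : symb N (bas a b) = 'X^(a + N - b).
Proof.
have [aN bN] : (a < (maxn a b).+1)%N /\ (b < (maxn a b).+1)%N by split; lia.
rewrite (symb_boxE N (boxed_bas aN bN)).
rewrite (sum_coef2_bas (G := fun i j x => x%:P * 'X^(i + N - j))) ?mul1r //.
by move=> i j; rewrite mul0r.
Qed.

Lemma symb_smul N p q : boxed N p -> boxed N q ->
  symb (N + N) (smul p q) = symb N p * symb N q.
Proof.
move=> bp bq; rewrite (symb_boxE N bp) (symb_boxE N bq) (smul_boxE bp bq).
rewrite (additive_sum (symbD _)) big_distrl; apply: eq_bigr => i _.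
rewrite (additive_sum (symbD _)) big_distrl; apply: eq_bigr => j _.
rewrite (additive_sum (symbD _)) big_distrr; apply: eq_bigr => k _.
rewrite (additive_sum (symbD _)) big_distrr; apply: eq_bigr => l _.
rewrite symbZ symb_bas polyCM /= mulrACA -exprD.
by congr (_ * 'X^_); have := ltn_ord j; have := ltn_ord l; lia.
Qed.

Lemma symb_toF N m : symb N (toF m) = 0.
Proof.
have [M bm] := boxed_exists m.
rewrite (toF_boxE bm) (additive_sum (symbD _)) big1 // => i _.
rewrite (additive_sum (symbD _)) big1 // => j _.
by rewrite symbZ /Eij symbB !symb_bas addSn subSS subrr mulr0.
Qed.

Lemma inF_sub_bas_shift a b n : inF (bas (a + n) (b + n) - bas a b).
Proof.
elim: n => [|n IHn]; first by rewrite !addn0 subrr; apply: inF0.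
have -> : bas (a + n.+1) (b + n.+1) - bas a b
   = (bas (a + n) (b + n) - bas a b) - E (a + n) (b + n).
  by rewrite /Eij !addnS; ring.
exact: inFB IHn (inF_E _ _).
Qed.

Definition unsymb N (S : {poly K}) : P :=
  \sum_(k < size S) (S`_k)%:P *: bas (k - N) (N - k).

Lemma unsymb_boxE M N (S : {poly K}) : (size S <= M)%N ->
  unsymb N S = \sum_(k < M) (S`_k)%:P *: bas (k - N) (N - k).
Proof.
move=> le_SM; apply: (sum_ord_widen (F := fun k => (S`_k)%:P *: bas (k - N) (N - k))) => //.
by move=> k /andP[le_Sk _]; rewrite nth_default // scale0r.
Qed.

Lemma unsymbD N (S T : {poly K}) : unsymb N (S + T) = unsymb N S + unsymb N T.
Proof.
pose M := maxn (size S) (size T).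
have le_SM : (size S <= M)%N by apply: leq_maxl.
have le_TM : (size T <= M)%N by apply: leq_maxr.
have le_STM : (size (S + T)%R <= M)%N.
  by rewrite (leq_trans (size_polyD _ _)) // geq_max le_SM le_TM.
rewrite (unsymb_boxE N le_STM) (unsymb_boxE N le_SM) (unsymb_boxE N le_TM) -big_split.
by apply: eq_bigr => k _; rewrite coefD polyCD scalerDl.
Qed.

Lemma unsymbZ N c (S : {poly K}) : unsymb N (c%:P * S) = c%:P *: unsymb N S.
Proof.
have le_cS : (size (c%:P * S)%R <= size S)%N by rewrite mul_polyC size_scale_leq.
rewrite (unsymb_boxE N le_cS) /unsymb scaler_sumr.
by apply: eq_bigr => k _; rewrite coefCM polyCM scalerA.
Qed.

Lemma unsymb_Xn N k : unsymb N 'X^k = bas (k - N) (N - k).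
Proof.
rewrite (unsymb_boxE N (leqnn _)) size_polyXn (sum_ord_single (ltnSn k)) => [|j jk].
  by rewrite coefXn eqxx scale1r.
by rewrite coefXn (negbTE jk) scale0r.
Qed.

Definition ydeg_le N w := forall i j, (N < j)%N -> w`_i`_j = 0.

Lemma inF_sub_unsymb N w : ydeg_le N w -> inF (w - unsymb N (symb N w)).
Proof.
move=> yw; have [M bw] := boxed_exists w.
pose h x := x - unsymb N (symb N x).
have hD : {morph h : p q / p + q}.
  by move=> p q; rewrite /h symbD unsymbD opprD addrACA.
rewrite -/(h w) (additive_expand hD bw); apply: inF_sum => i _; apply: inF_sum => j _.
have [lt_Nj|le_jN] := ltnP N j; first by rewrite yw // scale0r (additive0 hD); apply: inF0.
rewrite /h symbZ unsymbZ -scalerBr; apply: inFZ.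
rewrite symb_bas unsymb_Xn.
have := inF_sub_bas_shift (i - j) (j - i) (minn i j).
by congr (inF (bas _ _ - bas _ _)); lia.
Qed.

Lemma symb_eq0_inF N w : ydeg_le N w -> symb N w = 0 -> inF w.
Proof.
move=> yw symb0; have := inF_sub_unsymb yw.
by rewrite symb0 /unsymb size_poly0 big_ord0 subr0.
Qed.

Lemma ydeg_le_sub N w c a b : boxed N w -> (b <= N)%N -> ydeg_le N (w - c%:P *: bas a b).
Proof.
move=> bw le_bN i j lt_Nj.
rewrite !coefB coef2CZ coef2_bas bw ?(ltnW lt_Nj) ?orbT //.
by rewrite (gtn_eqF (leq_ltn_trans le_bN lt_Nj)) andbF mulr0 subr0.
Qed.

Lemma coef2_toF m i j : (toF m)`_i`_j =
  m`_i`_j - (if (0 < i)%N && (0 < j)%N then m`_i.-1`_j.-1 else 0).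
Proof.
apply/eqP; rewrite -subr_eq0; apply/eqP; move: m.
apply: lin_vanish => [m m'|c m|a b].
- by rewrite toFD !coefD; case: ifP => _; rewrite ?coefD; ring.
- by rewrite toFZ !coef2CZ; case: ifP => _; rewrite ?coef2CZ; ring.
rewrite toF_bas /Eij !coefB !coef2_bas.
by case: i => [|i]; case: j => [|j] /=; rewrite ?andbF ?subr0 ?subrr.
Qed.

Lemma toF_eq0 m : toF m = 0 -> m = 0.
Proof.
move=> toFm0; have coef_m i j : m`_i`_j = if (0 < i)%N && (0 < j)%N then m`_i.-1`_j.-1 else 0.
  by apply/eqP; rewrite -subr_eq0 -coef2_toF toFm0 !coef0.
apply: poly2P => i; elim: i => [|i IHi] j; rewrite coef_m !coef0 //.
by case: j => [|j] //=; rewrite IHi !coef0.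
Qed.

Lemma toF_inj : injective (@toF K).
Proof.
move=> m m' /eqP; rewrite -subr_eq0 -toFB => /eqP/toF_eq0/eqP.
by rewrite subr_eq0 => /eqP.
Qed.

Lemma uF_inj : injective (@uF K).
Proof. by move=> m m' /addrI/toF_inj. Qed.

Lemma coef2_mmul_bas m a b i j :
  (mmul m (bas a b))`_i`_j = m`_i`_a * (if j == b then 1 else 0).
Proof.
apply/eqP; rewrite -subr_eq0; apply/eqP; move: m.
apply: lin_vanish => [m m'|c m|k l].
- by rewrite mmulDl !coefD; ring.
- by rewrite mmulZl !coef2CZ; ring.
rewrite mmul_bas; case: (l =P a) => [->|la]; rewrite !coef2_bas.
  by case: (i == k); case: (j == b) => /=; rewrite ?eqxx ?mulr1 ?mulr0 ?subrr.
by rewrite !coef0 (introF eqP (nesym la)) andbF mul0r subrr.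
Qed.

Lemma coef2_bas_mmul m a b i j :
  (mmul (bas a b) m)`_i`_j = (if i == a then 1 else 0) * m`_b`_j.
Proof.
apply/eqP; rewrite -subr_eq0; apply/eqP; move: m.
apply: lin_vanish => [m m'|c m|k l].
- by rewrite mmulDr !coefD; ring.
- by rewrite mmulZr !coef2CZ; ring.
rewrite mmul_bas; case: (b =P k) => [->|bk]; rewrite !coef2_bas.
  by case: (i == a); case: (j == l) => /=; rewrite ?eqxx ?mulr1 ?mul1r ?mulr0 ?mul0r ?subrr.
by rewrite !coef0 (introF eqP bk) /= mulr0 subrr.
Qed.

Lemma mmul_bas_centralizer m :
  (forall a b : nat, a != b -> mmul m (bas a b) = mmul (bas a b) m) -> m = 0.
Proof.
move=> mC; have [N bm] := boxed_exists m; apply: poly2P => i j; rewrite !coef0.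
pose L := (N + i + j).+1; have jL : j != L by rewrite /L; lia.
have := congr1 (fun p => p`_i`_L) (mC j L jL).
rewrite /= coef2_mmul_bas coef2_bas_mmul eqxx mulr1 => ->.
by rewrite bm ?mulr0 // /L; lia.
Qed.

Lemma inGL_bas (a b : nat) : a != b -> inGL (bas a b).
Proof.
move=> ab; exists (- bas a b); rewrite /circ.
rewrite (additiveN (mmulDr _)) (additiveN (fun m m' => mmulDl m m' _)).
by rewrite mmul_bas eq_sym (negbTE ab) oppr0 !addr0 subrr addNr.
Qed.

Lemma uF_centralizer m :
  (forall a b : nat, a != b -> smul (uF m) (uF (bas a b)) = smul (uF (bas a b)) (uF m)) ->
  m = 0.
Proof.
move=> mC; apply: mmul_bas_centralizer => a b ab.
move: (mC a b ab); rewrite -!uF_circ => /uF_inj; rewrite /circ.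
by rewrite [bas a b + m]addrC => /addrI.
Qed.

Lemma in1FP (u : P) : in1F u <-> exists2 m, inGL m & u = uF m.
Proof.
split=> [[[m eq_m] [v [[n eq_n] [uv1 vu1]]]]|[m [n [mn0 nm0]] ->]].
  have eq_u : u = uF m by rewrite /uF -eq_m addrC subrK.
  have eq_v : v = uF n by rewrite /uF -eq_n addrC subrK.
  exists m => //; exists n; split; apply: uF_inj; rewrite uF0 uF_circ -?eq_u -?eq_v //.
have uF_sub k : uF k - sone K = toF k by rewrite /uF addrC addKr.
split; first by rewrite uF_sub; exists m.
by exists (uF n); rewrite uF_sub -!uF_circ mn0 nm0 uF0; split => //; exists n.
Qed.

Lemma s1unit_scale_in1F c v : c != 0 -> in1F v -> s1unit (smul (sc c) v).
Proof.
move=> c0 [_ [w [_ [vw1 wv1]]]]; exists ((c^-1)%:P *: w).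
by rewrite smul_scl !smulZZ vw1 wv1 mulfV ?mulVf // !scale1r.
Qed.

Lemma scale_uF_circ c d m n :
  smul (sc (c * d)) (uF (circ m n)) = smul (smul (sc c) (uF m)) (smul (sc d) (uF n)).
Proof. by rewrite !smul_scl smulZl smulZr scalerA -polyCM uF_circ. Qed.

Lemma scale_uF_inj c d m n : c != 0 ->
  smul (sc c) (uF m) = smul (sc d) (uF n) -> c = d /\ m = n.
Proof.
move=> c0; rewrite !smul_scl => eq_cd.
have := congr1 (symb 0) eq_cd.
rewrite !symbZ !symbD !symb_toF /sone symb_bas !addr0 expr0 !mulr1 => /polyC_inj cd.
by split => //; apply: uF_inj; apply: (scaleCI c0); rewrite eq_cd cd.
Qed.

Lemma uF_bas_in1F (a b : nat) : a != b -> in1F (uF (bas a b)).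
Proof. by move=> ab; apply/in1FP; exists (bas a b) => //; apply: inGL_bas. Qed.

Lemma center_1F u : in1F u -> (forall v, in1F v -> smul u v = smul v u) -> u = sone K.
Proof.
case/in1FP=> m _ -> mC; suff -> : m = 0 by rewrite uF0.
by apply: uF_centralizer => a b ab; apply/mC/uF_bas_in1F.
Qed.

Lemma conj_by_uF m : inGL m -> exists f, conj_by (uF m) f.
Proof.
case=> n [_ nm0]; exists (fun s => smul (smul (uF m) s) (uF n)) => s.
by rewrite smulA -uF_circ nm0 uF0 smul1r.
Qed.

Lemma conj_by_circ m n f g : conj_by (uF m) f -> conj_by (uF n) g ->
  conj_by (uF (circ m n)) (f \o g).
Proof. by move=> fm gn s; rewrite uF_circ /= -smulA fm smulA gn -smulA. Qed.

Lemma conj_by_uF_inj m n f : inGL m -> conj_by (uF m) f -> conj_by (uF n) f -> m = n.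
Proof.
case=> m' [mm'0 m'm0] fm fn.
have f_conj s : f s = smul (smul (uF m) s) (uF m').
  by rewrite -fm smulA -uF_circ mm'0 uF0 smul1r.
have central s : smul (smul (uF m') (uF n)) s = smul s (smul (uF m') (uF n)).
  have := congr1 (smul (uF m')) (fn s).
  rewrite f_conj !smulA -[smul (uF m') (smul (uF m) _)]smulA -uF_circ m'm0 uF0 smul1l.
  by move=> ->.
have m'n0 : circ m' n = 0.
  by apply: uF_centralizer => a b _; rewrite uF_circ central.
apply: uF_inj; rewrite -[uF n]smul1l -uF0 -mm'0 uF_circ smulA -uF_circ m'n0 uF0.
by rewrite smul1r.
Qed.

Section CharZero.
Hypothesis charK0 : [pchar K] =i pred0.

Lemma unit_modF_symb u v N c d (a b : nat) :
  boxed N u -> boxed N v -> smul u v = sone K -> smul v u = sone K ->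
  symb N u = c%:P * 'X^a -> symb N v = d%:P * 'X^b -> c * d = 1 ->
  (a + b = N + N)%N -> (N <= a)%N -> inF (u - sc c) /\ inF (v - sc d).
Proof.
move=> bu bv uv1 vu1 symb_u symb_v cd ab le_Na.
pose n := (a - N)%N; have le_nN : (n <= N)%N by rewrite /n; lia.
have Fu : inF (u - c%:P *: bas n 0).
  apply: (symb_eq0_inF (ydeg_le_sub c n bu (leq0n N))).
  by rewrite symbB symbZ symb_u symb_bas subn0 /n subnK // subrr.
have Fv : inF (v - d%:P *: bas 0 n).
  apply: (symb_eq0_inF (ydeg_le_sub d 0 bv le_nN)).
  by rewrite symbB symbZ symb_v symb_bas add0n (_ : N - n = b)%N ?subrr // /n; lia.
have n0 : n%:R = 0 :> K.
  have := @unit_index_eq0 n c d _ _ (bas n 0) (bas 0 n) Fu Fv cd.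
  by rewrite !smul_bas !subnn !addn0 !(addrC (_%:P *: _)) !subrK; apply.
move: n0 Fu Fv; move/eqP; rewrite ((pcharf0P K).1 charK0 n) => /eqP->.
by rewrite -!sc_sone.
Qed.

Lemma unit_modF u v : smul u v = sone K -> smul v u = sone K ->
  exists c d : K, [/\ c * d = 1, inF (u - sc c) & inF (v - sc d)].
Proof.
move=> uv1 vu1; have [N [bu bv]] := boxed_exists2 u v.
have := symb_smul bu bv; rewrite uv1 /sone symb_bas add0n subn0 => symb_uv.
have [c [a [c0 symb_u]]] := monomial_factor (esym symb_uv).
have [d [b [d0 symb_v]]] := monomial_factor (etrans (mulrC _ _) (esym symb_uv)).
move: symb_uv; rewrite symb_u symb_v mulrACA -polyCM -exprD => /(congr1 (coefp (a + b))).
rewrite /= coefCM !coefXn eqxx mulr1.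
have [ab|] := eqVneq (a + b)%N (N + N)%N; last first.
  by move=> _ /esym/eqP; rewrite mulf_eq0 (negbTE c0) (negbTE d0).
move=> /esym; rewrite mulr1n => cd; exists c, d.
have [le_Na|lt_aN] := leqP N a.
  by have [] := unit_modF_symb bu bv uv1 vu1 symb_u symb_v cd ab le_Na.
have dc : d * c = 1 by rewrite mulrC.
have ba : (b + a = N + N)%N by rewrite addnC.
have le_Nb : (N <= b)%N by lia.
by have [Fv Fu] := unit_modF_symb bv bu vu1 uv1 symb_v symb_u dc ba le_Nb.
Qed.

Lemma s1unit_in1F u : s1unit u -> exists (c : K) v, c != 0 /\ in1F v /\ u = smul (sc c) v.
Proof.
case=> v [uv1 vu1]; have [c [d [cd Fu Fv]]] := unit_modF uv1 vu1.
have dc : d * c = 1 by rewrite mulrC.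
have c0 : c != 0 by apply: contra_eq_neq cd => ->; rewrite mul0r eq_sym oner_neq0.
have scale_inF e f w : e * f = 1 -> inF (w - sc f) -> inF (e%:P *: w - sone K).
  move=> ef Fw; have -> : e%:P *: w - sone K = e%:P *: (w - sc f).
    by rewrite scalerBr sc_sone scalerA -polyCM ef scale1r.
  exact: inFZ.
exists c, (d%:P *: u); split => //; split.
  split; first exact: scale_inF dc Fu.
  exists (c%:P *: v); split; first exact: scale_inF cd Fv.
  by rewrite !smulZZ uv1 vu1 dc cd !scale1r.
by rewrite smul_scl scalerA -polyCM cd scale1r.
Qed.

Lemma s1unitP u : s1unit u <-> exists (c : K) v, c != 0 /\ in1F v /\ u = smul (sc c) v.
Proof.
split=> [|[c [v [c0 [v1F ->]]]]]; first exact: s1unit_in1F.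
exact: s1unit_scale_in1F.
Qed.

Lemma s1unit_uF u : s1unit u -> exists (c : K) m, c != 0 /\ inGL m /\ u = smul (sc c) (uF m).
Proof.
case/s1unit_in1F=> c [v [c0 [/in1FP[m GLm ->] ->]]].
by exists c, m.
Qed.

Lemma center_s1unit u : s1unit u -> (forall v, s1unit v -> smul u v = smul v u) ->
  exists c : K, c != 0 /\ u = sc c.
Proof.
case/s1unit_uF=> c [m [c0 [_ ->]]] uC; exists c; split => //.
suff -> : m = 0 by rewrite uF0 smul1r.
apply: uF_centralizer => a b ab; apply: (scaleCI c0).
have := s1unit_scale_in1F (oner_neq0 K) (uF_bas_in1F ab).
by rewrite smul_scl polyC1 scale1r => /uC; rewrite !smul_scl smulZl smulZr.
Qed.

Lemma conj_by_s1unit w f : s1unit w -> conj_by w f -> exists m, inGL m /\ conj_by (uF m) f.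
Proof.
case/s1unit_uF=> c [m [c0 [GLm ->]]] fw; exists m; split => // s.
by apply: (scaleCI c0); move: (fw s); rewrite !smul_scl smulZr smulZl.
Qed.

End CharZero.

End Jacobson.

Unset Implicit Arguments.

Theorem theorem4p5 (K : fieldType) (hK : [pchar K] =i pred0) :
  (* (1) units of S_1 = K^x (1+F)^x *)
  (forall u, s1unit u <->
     exists (c : K) v, c != 0 /\ in1F v /\ u = smul (sc c) v)
  (* (1) ... ~= K^x * GL_oo(K), via (c, 1 + a) |-> c (1 + toF a) *)
  /\ (forall (c : K) a, c != 0 -> inGL a -> s1unit (smul (sc c) (uF a)))
  /\ (forall (c d : K) a b, c != 0 -> d != 0 -> inGL a -> inGL b ->
        smul (sc (c * d)) (uF (circ a b))
        = smul (smul (sc c) (uF a)) (smul (sc d) (uF b)))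
  /\ (forall (c d : K) a b, c != 0 -> d != 0 -> inGL a -> inGL b ->
        smul (sc c) (uF a) = smul (sc d) (uF b) -> c = d /\ a = b)
  /\ (forall u, s1unit u ->
        exists (c : K) a, c != 0 /\ inGL a /\ u = smul (sc c) (uF a))
  (* (2) Z(units of S_1) = K^x *)
  /\ (forall u, s1unit u ->
        ((forall v, s1unit v -> smul u v = smul v u) <->
         exists c : K, c != 0 /\ u = sc c))
  (* (2) Z((1+F)^x) = {1} *)
  /\ (forall u, in1F u ->
        ((forall v, in1F v -> smul u v = smul v u) <-> u = sone K))
  (* (3) Inn(S_1) ~= GL_oo(K) via omega_u <-> u, u = 1 + toF a in (1+F)^x *)
  /\ (forall a, inGL a -> exists f : {poly {poly K}} -> {poly {poly K}}, conj_by (uF a) f)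
  /\ (forall a b (f g : {poly {poly K}} -> {poly {poly K}}), inGL a -> inGL b -> conj_by (uF a) f -> conj_by (uF b) g ->
        conj_by (uF (circ a b)) (fun s => f (g s)))
  /\ (forall a b (f : {poly {poly K}} -> {poly {poly K}}), inGL a -> inGL b -> conj_by (uF a) f -> conj_by (uF b) f ->
        a = b)
  /\ (forall w (f : {poly {poly K}} -> {poly {poly K}}), s1unit w -> conj_by w f ->
        exists a, inGL a /\ conj_by (uF a) f).
Proof.
split; first exact: s1unitP hK.
split => [c m c0 GLm|].
  by apply: s1unit_scale_in1F => //; apply/in1FP; exists m.
split => [c d m n *|]; first exact: scale_uF_circ.
split => [c d m n c0 *|]; first exact: scale_uF_inj.
split; first exact: s1unit_uF hK.
split => [u uU|].
  split; first exact: (center_s1unit hK uU).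
  by case=> c [_ ->] v _; rewrite smul_scl smul_scr.
split => [u u1F|].
  by split=> [|-> v _]; [exact: center_1F u1F | rewrite smul1l smul1r].
split; first exact: conj_by_uF.
split => [m n f g *|]; first exact: conj_by_circ.
split => [m n f GLm *|]; first exact: conj_by_uF_inj GLm _ _.
exact: conj_by_s1unit hK.
Qed.
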